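(* Let $H$ be a complex Hilbert space and $\{\mathcal{U}(t)\}_{t\geq 0}$ a strongly continuous semigroup on $H$ with generator $\mathcal{L}$. Let $z\in D(\mathcal{L}^\dagger)$ with $z\neq 0$, let $\mathcal{P}:=(\cdot,z)(z,z)^{-1}z$ and $\mathcal{Q}:=1-\mathcal{P}$. Let $\{e^{\overline{\mathcal{QL}}t}\}_{t\geq 0}$ denote the strongly continuous semigroup generated by $\overline{\mathcal{QL}}$. Then $\{\mathcal{G}(t):=\mathcal{P}+e^{\overline{\mathcal{QL}}t}\mathcal{Q}\}_{t\geq0}$ is a strongly continuous semigroup with generator $\overline{\mathcal{QL}}\mathcal{Q}$.
   Context: The scalar product $(\cdot,\cdot)$ on $H$ is conjugate-linear in its second argument. The generator is $\mathcal{L}x:=\lim_{h\searrow 0}\frac1h[\mathcal{U}(h)x-x]$ on the set $D(\mathcal{L})$ where the limit exists. $\dagger$ denotes the adjoint, the overbar the closure; $D(\overline{\mathcal{QL}}\mathcal{Q})=\{x\in H:\mathcal{Q}x\in D(\overline{\mathcal{QL}})\}$. The notation $\{e^{\mathcal{A}t}\}_{t\ge0}$ means the strongly continuous semigroup generated by $\mathcal{A}$. *)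

From Stdlib Require Import Reals.
From Coquelicot Require Export Coquelicot.
Open Scope R_scope.

Section Defs.
Variable H : CompleteNormedModule C_AbsRing.

(* inner product, linear in the first argument, conjugate-linear in the
   second, inducing the norm of H (so H is a complex Hilbert space) *)
Definition is_inner_product (ip : H -> H -> C) : Prop :=
  (forall x y w : H, ip (plus x y) w = Cplus (ip x w) (ip y w)) /\
  (forall (a : C) (x y : H), ip (scal a x) y = Cmult a (ip x y)) /\
  (forall x y : H, ip y x = Cconj (ip x y)) /\
  (forall x : H, norm x = sqrt (Re (ip x x))).

Record op := mkOp { dom : H -> Prop; app : H -> H }.

Definition bounded_linear (f : H -> H) : Prop :=
  (forall x y, f (plus x y) = plus (f x) (f y)) /\
  (forall (a : C) x, f (scal a x) = scal a (f x)) /\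
  (exists M : R, forall x, norm (f x) <= M * norm x).

Definition C0_semigroup (U : R -> H -> H) : Prop :=
  (forall t, 0 <= t -> bounded_linear (U t)) /\
  (forall x, U 0 x = x) /\
  (forall t s x, 0 <= t -> 0 <= s -> U (t + s) x = U t (U s x)) /\
  (forall x, filterlim (fun t => U t x) (at_right 0) (locally x)).

Definition diffq (U : R -> H -> H) (x : H) (h : R) : H :=
  scal (RtoC (/ h)) (minus (U h x) x).

Definition is_generator (U : R -> H -> H) (A : op) : Prop :=
  forall x, (dom A x <-> exists y, filterlim (diffq U x) (at_right 0) (locally y)) /\
            (dom A x -> filterlim (diffq U x) (at_right 0) (locally (app A x))).

Definition in_adj_dom (ip : H -> H -> C) (A : op) (z : H) : Prop :=
  exists w : H, forall x, dom A x -> ip (app A x) z = ip x w.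

Definition is_closure (A B : op) : Prop :=
  forall x y : H,
    (dom B x /\ app B x = y) <->
    (forall eps : R, 0 < eps ->
       exists a, dom A a /\ norm (minus a x) < eps /\ norm (minus (app A a) y) < eps).

Definition projP (ip : H -> H -> C) (z x : H) : H :=
  scal (Cdiv (ip x z) (ip z z)) z.
Definition projQ (ip : H -> H -> C) (z x : H) : H := minus x (projP ip z x).

Definition lcomp (F : H -> H) (A : op) : op := mkOp (dom A) (fun x => F (app A x)).
Definition rcomp (A : op) (F : H -> H) : op :=
  mkOp (fun x => dom A (F x)) (fun x => app A (F x)).
End Defs.

Arguments mkOp {H}. Arguments dom {H}. Arguments app {H}.

(* The key fact is that [T], the semigroup generated by the closure of [QL], leaves
   [(., z)] invariant.  The range of the closure of [QL] is orthogonal to [z], being made of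
   limits of vectors [Q L x].  For small [h > 0], the increment [T h y - y] is the generator
   applied to [w = int_0^h T s y ds], because the difference quotients of [T] at [w] are
   averages of the orbit of [y] over [[h, h + e]] and [[0, e]]; hence [(T h y, z) = (y, z)],
   first for small [h] and then for all [h] by the semigroup law.  So [P T(t) = P], which
   makes [G(t) = P + T(t) Q] a semigroup whose difference quotients at [x] are those of [T]
   at [Q x].  The integral needs the orbit to be continuous, i.e. [T] to be bounded near [0];
   this follows from the uniform boundedness principle, proved by Sokal's elementary argument. *)

From Stdlib Require Import Reals Lra Lia Psatz Classical IndefiniteDescription.
From Coquelicot Require Import Coquelicot.
Open Scope R_scope.
Set Keyed Unification.

Lemma RtoC_re_im (c : C) : Im c = 0 -> c = RtoC (Re c).
Proof. destruct c as [a b]; unfold Re, Im, RtoC; simpl; intros ->; reflexivity. Qed.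

Section ComplexNormedModule.
Context (V : NormedModule C_AbsRing).

Lemma norm_scal_C (a : C) (x : V) : norm (scal a x) = Cmod a * norm x.
Proof.
  destruct (Ceq_dec a 0) as [->|a0].
  { rewrite Cmod_0, Rmult_0_l. transitivity (norm (@zero V)); [|apply norm_zero].
    f_equal. exact (scal_zero_l x). }
  apply Rle_antisym; [exact (norm_scal a x)|].
  assert (Ha : 0 < Cmod a) by (apply Cmod_gt_0; exact a0).
  apply Rmult_le_reg_l with (/ Cmod a); [apply Rinv_0_lt_compat; lra|].
  rewrite <- Rmult_assoc, Rinv_l, Rmult_1_l by lra.
  rewrite <- Cmod_inv by exact a0.
  replace x with (scal (Cinv a) (scal a x)) at 1.
  - exact (norm_scal (Cinv a) (scal a x)).
  - rewrite scal_assoc. change (mult (Cinv a) a) with (Cmult (Cinv a) a).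
    rewrite Cinv_l by exact a0. exact (scal_one x).
Qed.

Lemma norm_scal_RtoC (r : R) (x : V) : norm (scal (RtoC r) x) = Rabs r * norm x.
Proof. rewrite norm_scal_C, Cmod_R. reflexivity. Qed.

End ComplexNormedModule.

Section AbelianGroupFacts.
Context {G : AbelianGroup}.

Lemma minus_plus_l (a b : G) : minus (plus a b) a = b.
Proof.
  unfold minus. rewrite (plus_comm a b), <- plus_assoc, plus_opp_r. apply plus_zero_r.
Qed.

Lemma plus_minus_cancel (a x : G) : plus a (minus x a) = x.
Proof.
  unfold minus. rewrite (plus_comm x (opp a)), plus_assoc, plus_opp_r. apply plus_zero_l.
Qed.

Lemma minus_plus_plus_l (a b c : G) : minus (plus a b) (plus a c) = minus b c.
Proof.
  unfold minus. rewrite opp_plus, <- plus_assoc, (plus_assoc b), (plus_comm b (opp a)),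
    <- (plus_assoc (opp a)), (plus_assoc a), plus_opp_r, plus_zero_l. reflexivity.
Qed.

Lemma minus_minus_swap (a b c d : G) :
  minus (minus a b) (minus c d) = minus (minus a c) (minus b d).
Proof.
  unfold minus. rewrite !opp_plus, !opp_opp, <- !plus_assoc. f_equal.
  rewrite !plus_assoc, (plus_comm (opp b) (opp c)). reflexivity.
Qed.

Lemma minus_eq_of_plus_eq (a b c d : G) : plus a b = plus c d -> minus d a = minus b c.
Proof.
  intro E. rewrite <- (minus_plus_plus_l c d a), <- E, (plus_comm c a). apply minus_plus_plus_l.
Qed.
End AbelianGroupFacts.

Lemma norm_le_minus_plus {K : AbsRing} {W : NormedModule K} (x a : W) :
  norm x <= norm (minus x a) + norm a.
Proof.
  eapply Rle_trans; [|apply norm_triangle]. right. f_equal.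
  rewrite plus_comm. symmetry. exact (plus_minus_cancel (G := NormedModule.AbelianGroup K W) a x).
Qed.

Lemma bounded_linear_is_linear (V : CompleteNormedModule C_AbsRing) (f : V -> V) :
  bounded_linear V f -> is_linear (K := C_AbsRing) (U := V) (V := V) f.
Proof.
  intros (Hplus & Hscal & M & HM). apply Build_is_linear; auto.
  exists (Rmax M 1). split; [pose proof (Rmax_r M 1); lra|].
  intro x. eapply Rle_trans; [apply HM|].
  apply Rmult_le_compat_r; [apply norm_ge_0 | apply Rmax_l].
Qed.

Lemma is_linear_bounded_linear (V : CompleteNormedModule C_AbsRing) (f : V -> V) :
  is_linear (K := C_AbsRing) (U := V) (V := V) f -> bounded_linear V f.
Proof.
  intro Hf. split; [|split].
  - exact (linear_plus f Hf).
  - exact (linear_scal f Hf).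
  - destruct (linear_norm f Hf) as [M [_ HM]]. exists M. exact HM.
Qed.

(** * Inner products and the projection [P] *)

Section InnerProduct.
Context (V : CompleteNormedModule C_AbsRing) (ip : V -> V -> C) (Hip : is_inner_product V ip).

Lemma ip_plus_l x y w : ip (plus x y) w = Cplus (ip x w) (ip y w).
Proof. apply Hip. Qed.

Lemma ip_scal_l a x y : ip (scal a x) y = Cmult a (ip x y).
Proof. apply Hip. Qed.

Lemma ip_conj x y : ip y x = Cconj (ip x y).
Proof. apply Hip. Qed.

Lemma norm_ip x : norm x = sqrt (Re (ip x x)).
Proof. apply Hip. Qed.

Lemma ip_opp_l x y : ip (opp x) y = Copp (ip x y).
Proof.
  transitivity (ip (scal (Copp (RtoC 1)) x) y).
  - f_equal. symmetry. exact (scal_opp_one x).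
  - rewrite ip_scal_l. ring.
Qed.

Lemma ip_minus_l x y w : ip (minus x y) w = Cminus (ip x w) (ip y w).
Proof. unfold minus. rewrite ip_plus_l, ip_opp_l. ring. Qed.

Lemma ip_minus_r x y w : ip w (minus x y) = Cminus (ip w x) (ip w y).
Proof.
  rewrite ip_conj, ip_minus_l, (ip_conj w x), (ip_conj w y).
  destruct (ip x w), (ip y w). unfold Cconj, Cminus, Cplus, Copp; simpl. f_equal; ring.
Qed.

Lemma ip_scal_r a x y : ip y (scal a x) = Cmult (Cconj a) (ip y x).
Proof.
  rewrite ip_conj, ip_scal_l, (ip_conj y x).
  destruct a, (ip x y). unfold Cconj, Cmult; simpl. f_equal; ring.
Qed.

Lemma ip_zero_l y : ip zero y = RtoC 0.
Proof.
  transitivity (ip (minus zero zero) y).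
  - f_equal. symmetry. exact (@minus_eq_zero (CompleteNormedModule.AbelianGroup _ V) zero).
  - rewrite ip_minus_l. ring.
Qed.

Lemma ip_self x : ip x x = RtoC (norm x ^ 2).
Proof.
  assert (Him : Im (ip x x) = 0).
  { pose proof (ip_conj x x) as E. destruct (ip x x) as [a b].
    unfold Cconj in E; simpl in *. injection E. lra. }
  assert (Hre : 0 <= Re (ip x x)).
  { apply Rnot_lt_le. intro Hneg.
    pose proof (norm_ip x) as E. rewrite sqrt_neg_0 in E by lra.
    apply norm_eq_zero in E. subst x. rewrite ip_zero_l in Hneg. simpl in Hneg. lra. }
  rewrite norm_ip, pow2_sqrt by exact Hre. apply RtoC_re_im, Him.
Qed.

Lemma Cauchy_Schwarz x z : Cmod (ip x z) <= norm x * norm z.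
Proof.
  destruct (Req_dec (norm z) 0) as [hz|hz].
  { apply norm_eq_zero in hz. subst z. rewrite norm_zero, Rmult_0_r.
    rewrite ip_conj, ip_zero_l. unfold Cconj; simpl. rewrite Ropp_0. apply Req_le, Cmod_0. }
  pose proof (norm_ge_0 z). pose proof (norm_ge_0 x).
  set (r := norm z ^ 2). assert (hr : 0 < r) by (unfold r; nra).
  set (c := Cmult (ip x z) (RtoC (/ r))).
  (* [0 <= |x - c z|^2 = |x|^2 - |(x,z)|^2 / |z|^2] *)
  assert (Hsq : 0 <= Re (ip (minus x (scal c z)) (minus x (scal c z))))
    by (rewrite ip_self; apply pow2_ge_0).
  rewrite !ip_minus_l, !ip_minus_r, !ip_scal_l, !ip_scal_r,
    !ip_self, (ip_conj x z) in Hsq.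
  fold r in Hsq. unfold c in Hsq. destruct (ip x z) as [p1 p2].
  unfold Cconj, Cminus, Cplus, Copp, Cmult, RtoC, Re in Hsq; simpl in Hsq.
  assert (Hle : p1 ^ 2 + p2 ^ 2 <= norm x ^ 2 * r).
  { apply Rmult_le_reg_r with (/ r); [apply Rinv_0_lt_compat; lra|].
    match type of Hsq with 0 <= ?E =>
      replace E with (norm x ^ 2 - (p1 ^ 2 + p2 ^ 2) * / r) in Hsq by (field; lra) end.
    replace (norm x ^ 2 * r * / r) with (norm x ^ 2) by (field; lra). lra. }
  unfold Cmod; simpl. rewrite <- (sqrt_pow2 (norm x * norm z)) by nra.
  apply sqrt_le_1_alt. unfold r in Hle. simpl in *. nra.
Qed.
End InnerProduct.

Section Projection.
Context (V : CompleteNormedModule C_AbsRing) (ip : V -> V -> C) (Hip : is_inner_product V ip).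
Context (z : V) (Hz0 : z <> zero).

Lemma projP_ext x y : ip x z = ip y z -> projP V ip z x = projP V ip z y.
Proof. intro E. unfold projP. rewrite E. reflexivity. Qed.

Lemma ip_self_neq0 : ip z z <> RtoC 0.
Proof.
  rewrite (ip_self V ip Hip). intro E. apply RtoC_inj in E. revert E.
  apply pow_nonzero, Rgt_not_eq, norm_gt_0, Hz0.
Qed.

Lemma ip_projP x : ip (projP V ip z x) z = ip x z.
Proof. unfold projP. rewrite (ip_scal_l V ip Hip). field. apply ip_self_neq0. Qed.

Lemma ip_projQ x : ip (projQ V ip z x) z = RtoC 0.
Proof. unfold projQ. rewrite (ip_minus_l V ip Hip), ip_projP. ring. Qed.

Lemma projP_idem x : projP V ip z (projP V ip z x) = projP V ip z x.
Proof. apply projP_ext, ip_projP. Qed.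

Lemma projP_bounded_linear : bounded_linear V (projP V ip z).
Proof.
  unfold projP. split; [|split].
  - intros x y. rewrite (ip_plus_l V ip Hip).
    transitivity (scal (plus (Cdiv (ip x z) (ip z z)) (Cdiv (ip y z) (ip z z)) : C_AbsRing) z).
    + f_equal. change (plus ?a ?b) with (Cplus a b). field. apply ip_self_neq0.
    + exact (scal_distr_r _ _ z).
  - intros a x. rewrite (ip_scal_l V ip Hip).
    transitivity (scal (mult a (Cdiv (ip x z) (ip z z)) : C_AbsRing) z).
    + f_equal. change (mult ?a ?b) with (Cmult a b). field. apply ip_self_neq0.
    + symmetry. exact (scal_assoc _ _ z).
  - exists 1. intro x.
    assert (hz : 0 < norm z) by (apply norm_gt_0; exact Hz0).
    assert (Hcoef : Cmod (Cdiv (ip x z) (ip z z)) = Cmod (ip x z) / norm z ^ 2).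
    { rewrite (ip_self V ip Hip), Cmod_div, Cmod_R, Rabs_right;
        [reflexivity | apply Rle_ge, pow2_ge_0 | intro E; apply RtoC_inj in E; nra]. }
    rewrite norm_scal_C, Hcoef. pose proof (Cauchy_Schwarz V ip Hip x z).
    apply Rmult_le_reg_r with (norm z); [exact hz|].
    replace (Cmod (ip x z) / norm z ^ 2 * norm z * norm z) with (Cmod (ip x z)) by (field; lra).
    lra.
Qed.
End Projection.

(** * Integration in a complex Banach space *)

(* Coquelicot integrates only in normed modules over [R]: we view a complex
   Banach space as a real one. *)
Section RestrictScalars.
Context (V : CompleteNormedModule C_AbsRing).
Local Notation VG := (CompleteNormedModule.AbelianGroup C_AbsRing V).
Local Notation VM := (CompleteNormedModule.ModuleSpace C_AbsRing V).
Local Notation VN := (CompleteNormedModule.NormedModule C_AbsRing V).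

Definition restrict_scalars_ModuleSpace_mixin : ModuleSpace.mixin_of R_Ring VG.
Proof.
  refine (ModuleSpace.Mixin R_Ring VG (fun (r : R) (x : VG) => @scal _ VM (RtoC r) x) _ _ _ _).
  - intros a b x. simpl. rewrite scal_assoc. f_equal.
    change (mult (RtoC a) (RtoC b)) with (Cmult a b). now rewrite RtoC_mult.
  - exact (@scal_one _ VM).
  - intros a x y. exact (@scal_distr_l _ VM _ x y).
  - intros a b x. simpl. rewrite <- (@scal_distr_r _ VM). f_equal.
    change (plus (RtoC a) (RtoC b)) with (Cplus a b). now rewrite RtoC_plus.
Defined.

Definition restrict_scalars_NormedModuleAux : NormedModuleAux R_AbsRing :=
  NormedModuleAux.Pack R_AbsRing V
    (NormedModuleAux.Class R_AbsRing V
       (ModuleSpace.Class R_Ring V (AbelianGroup.class VG) restrict_scalars_ModuleSpace_mixin)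
       (UniformSpace.class (CompleteNormedModule.UniformSpace C_AbsRing V))) V.

Definition restrict_scalars_NormedModule_mixin :
  NormedModule.mixin_of R_AbsRing restrict_scalars_NormedModuleAux.
Proof.
  refine (NormedModule.Mixin R_AbsRing restrict_scalars_NormedModuleAux (@norm _ VN) (@norm_factor _ VN) _ _ _ _ _).
  - exact (@norm_triangle _ VN).
  - intros l x. apply Req_le. exact (norm_scal_RtoC VN l x).
  - exact (@norm_compat1 _ VN).
  - exact (@norm_compat2 _ VN).
  - exact (@norm_eq_zero _ VN).
Defined.

Definition restrict_scalars : CompleteNormedModule R_AbsRing :=
  CompleteNormedModule.Pack R_AbsRing V
    (CompleteNormedModule.Class R_AbsRing V
       (NormedModule.Class R_AbsRing V _ restrict_scalars_NormedModule_mixin)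
       (CompleteSpace.mixin _ (CompleteSpace.class (CompleteNormedModule.CompleteSpace C_AbsRing V))))
    V.

Lemma bounded_linear_is_linear_R (f : V -> V) : bounded_linear V f ->
  is_linear (K := R_AbsRing) (U := restrict_scalars) (V := restrict_scalars) f.
Proof.
  intro Hf. destruct (linear_norm f (bounded_linear_is_linear V f Hf)) as [M HM].
  apply Build_is_linear.
  - exact (proj1 Hf).
  - intros r x. exact (proj1 (proj2 Hf) (RtoC r) x).
  - exists M. exact HM.
Qed.
End RestrictScalars.

Lemma is_RInt_linear {U W : NormedModule R_AbsRing} (l : U -> W) (f : R -> U) a b I :
  is_linear l -> is_RInt f a b I -> is_RInt (fun t => l (f t)) a b (l I).
Proof.
  intros Hl Hf. unfold is_RInt in *.
  eapply filterlim_ext; [|eapply filterlim_comp; [exact Hf | exact (linear_cont l I Hl)]].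
  intro ptd. simpl. rewrite (linear_scal l Hl). f_equal.
  induction ptd as [x0|h ptd IH] using SF_cons_ind.
  - exact (linear_zero l Hl).
  - rewrite !Riemann_sum_cons, <- IH, (linear_plus l Hl), (linear_scal l Hl). reflexivity.
Qed.

(** * Uniform boundedness principle *)

Lemma dependent_choice {A : Type} (P : nat -> A -> A -> Prop) (a0 : A) :
  (forall k a, exists b, P k a b) ->
  exists x : nat -> A, x O = a0 /\ forall k, P k (x k) (x (S k)).
Proof.
  intro Hstep.
  pose (next k a := proj1_sig (constructive_indefinite_description _ (Hstep k a))).
  exists (fix x k := match k with O => a0 | S k' => next k' (x k') end).
  split; [reflexivity|].
  intro k. exact (proj2_sig (constructive_indefinite_description _ (Hstep k _))).
Qed.

Lemma geometric_steps_dist {K : AbsRing} {W : NormedModule K} (x : nat -> W) (q : R) :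
  0 <= q < 1 -> (forall k, norm (minus (x (S k)) (x k)) <= q ^ S k) ->
  forall k m, (k <= m)%nat -> norm (minus (x m) (x k)) <= q ^ S k / (1 - q).
Proof.
  intros hq Hstep.
  assert (Htail : forall k d, norm (minus (x (d + k)%nat) (x k)) <= q ^ S k * (1 - q ^ d) / (1 - q)).
  { intros k d. induction d as [|d IH].
    - rewrite minus_eq_zero, norm_zero. simpl. apply Req_le. field. lra.
    - rewrite (minus_trans (x (d + k)%nat)). eapply Rle_trans; [apply norm_triangle|].
      pose proof (Hstep (d + k)%nat) as Hs.
      replace (q ^ S (d + k)) with (q ^ S d * q ^ k) in Hs by (rewrite <- pow_add; reflexivity).
      replace (q ^ S k * (1 - q ^ S d) / (1 - q))
        with (q ^ S k * (1 - q ^ d) / (1 - q) + q ^ S d * q ^ k) by (simpl; field; lra).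
      change (S d + k)%nat with (S (d + k)). lra. }
  intros k m hkm. replace m with (m - k + k)%nat by lia.
  eapply Rle_trans; [apply Htail|].
  assert (0 <= q ^ (m - k)) by (apply pow_le; lra). assert (0 <= q ^ S k) by (apply pow_le; lra).
  unfold Rdiv. apply Rmult_le_compat_r; [apply Rlt_le, Rinv_0_lt_compat; lra | nra].
Qed.

Lemma geometric_steps_converge {K : AbsRing} {W : CompleteNormedModule K} (x : nat -> W) (q : R) :
  0 <= q < 1 -> (forall k, norm (minus (x (S k)) (x k)) <= q ^ S k) ->
  exists X, forall k, norm (minus X (x k)) <= q ^ S k / (1 - q).
Proof.
  intros hq Hstep. pose proof (geometric_steps_dist x q hq Hstep) as Hdist.
  set (F := filtermap x eventually).
  assert (FF : ProperFilter F) by (apply filtermap_proper_filter, eventually_filter).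
  assert (Fc : cauchy F).
  { intro eps. destruct (pow_lt_1_zero q) with (y := eps * (1 - q)) as [N HN].
    { rewrite Rabs_right; lra. } { pose proof (cond_pos eps). nra. }
    exists (x N), N. intros m hm. apply (norm_compat1 (V := W)).
    eapply Rle_lt_trans; [apply Hdist; lia|].
    specialize (HN (S N) ltac:(lia)). rewrite Rabs_right in HN by (apply Rle_ge, pow_le; lra).
    apply Rmult_lt_reg_r with (1 - q); [lra|]. unfold Rdiv. rewrite Rmult_assoc, Rinv_l by lra. lra. }
  exists (lim F). intro k. apply Rle_plus_epsilon. intros e he.
  pose proof (@norm_factor_gt_0 _ W) as hnf.
  destruct (complete_cauchy F FF Fc (mkposreal _ (Rdiv_lt_0_compat _ _ he hnf))) as [N HN].
  specialize (HN (max N k) (Nat.le_max_l _ _)). apply (norm_compat2 (V := W)) in HN. simpl in HN.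
  replace (norm_factor * (e / norm_factor)) with e in HN by (field; lra).
  rewrite (minus_trans (x (max N k))). eapply Rle_trans; [apply (norm_triangle (V := W))|].
  rewrite <- norm_opp, opp_minus in HN.
  apply Rle_trans with (e + q ^ S k / (1 - q)); [|lra].
  apply Rplus_le_compat; [left; exact HN | apply Hdist, Nat.le_max_r].
Qed.

Section UniformBoundedness.
Context (V : CompleteNormedModule C_AbsRing).
Local Notation VG := (CompleteNormedModule.AbelianGroup C_AbsRing V).
Local Notation VN := (CompleteNormedModule.NormedModule C_AbsRing V).

Definition is_opnorm (S : V -> V) (N : R) : Prop :=
  0 <= N /\ (forall u, norm (S u) <= N * norm u) /\
  (forall eps, 0 < eps -> exists u, norm u <= 1 /\ N - eps < norm (S u)).

Lemma opnorm_exists (S : V -> V) : bounded_linear V S -> exists N, is_opnorm S N.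
Proof.
  intro HS. pose proof (bounded_linear_is_linear V S HS) as Hl.
  destruct (linear_norm S Hl) as [M [hM HM]].
  set (E := fun r => exists u : V, norm u <= 1 /\ r = norm (S u)).
  assert (E0 : E 0).
  { exists zero. rewrite (linear_zero S Hl), !(@norm_zero _ VN). split; [lra | reflexivity]. }
  assert (Hb : bound E).
  { exists M. intros r [u [hu ->]]. eapply Rle_trans; [apply HM|]. nra. }
  destruct (completeness E Hb (ex_intro _ 0 E0)) as [N [Hub Hlub]].
  exists N. split; [|split].
  - exact (Hub 0 E0).
  - intro u. destruct (Req_dec (norm u) 0) as [h0|h0].
    + apply (@norm_eq_zero _ VN) in h0. subst u.
      rewrite (linear_zero S Hl), !(@norm_zero _ VN). lra.
    + pose proof (norm_ge_0 u) as hu.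
      assert (Hv : E (norm (S (scal (RtoC (/ norm u)) u)))).
      { eexists; split; [|reflexivity]. rewrite (norm_scal_RtoC VN), Rabs_right.
        - right. field. exact h0.
        - apply Rle_ge, Rlt_le, Rinv_0_lt_compat. lra. }
      apply Hub in Hv. rewrite (linear_scal S Hl), (norm_scal_RtoC VN), Rabs_right in Hv
        by (apply Rle_ge, Rlt_le, Rinv_0_lt_compat; lra).
      apply Rmult_le_reg_l with (/ norm u); [apply Rinv_0_lt_compat; lra|].
      replace (/ norm u * (N * norm u)) with N by (field; exact h0). exact Hv.
  - intros eps he. apply NNPP. intro Hno.
    enough (N <= N - eps) by lra.
    apply Hlub. intros r [u [hu ->]]. apply Rnot_lt_le. intro Hl'. apply Hno. exists u. auto.
Qed.

(* [2 S v = S (x + v) - S (x - v)], so one of [x + v], [x - v] does as well as [v]. *)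
Lemma sokal_step (S : V -> V) (x v : V) : bounded_linear V S ->
  exists x', norm (minus x' x) <= norm v /\ norm (S v) <= norm (S x').
Proof.
  intro HS. pose proof (bounded_linear_is_linear V S HS) as Hl.
  assert (E : minus (S (plus x v)) (S (minus x v)) = scal (RtoC 2) (S v)).
  { rewrite (linear_plus S Hl), (linear_minus S _ _ Hl).
    change (minus (S x) (S v)) with (plus (S x) (opp (S v))).
    rewrite (@minus_plus_plus_l VG). unfold minus. rewrite opp_opp.
    transitivity (scal (plus (one : C_AbsRing) one) (S v)).
    - rewrite (@scal_distr_r _ (CompleteNormedModule.ModuleSpace C_AbsRing V)).
      rewrite (@scal_one _ (CompleteNormedModule.ModuleSpace C_AbsRing V)). reflexivity.
    - f_equal. change (plus ?a ?b) with (Cplus a b). rewrite <- RtoC_plus. f_equal. }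
  pose proof (norm_triangle (S (plus x v)) (opp (S (minus x v)))) as Ht.
  rewrite (@norm_opp _ VN) in Ht. change (plus ?a (opp ?b)) with (minus a b) in Ht.
  rewrite E, (norm_scal_RtoC VN), Rabs_right in Ht by lra.
  destruct (Rle_lt_dec (norm (S v)) (norm (S (plus x v)))) as [h|h].
  - exists (plus x v). split; [|exact h].
    replace (minus (plus x v) x) with v by (symmetry; exact (@minus_plus_l VG _ _)). lra.
  - exists (minus x v). split; [|lra].
    replace (minus (minus x v) x) with (opp v) by (symmetry; exact (@minus_plus_l VG _ _)).
    rewrite (@norm_opp _ VN). lra.
Qed.

Lemma large_value_near (S : V -> V) (N : R) : bounded_linear V S -> is_opnorm S N ->
  forall x r, 0 < r -> 0 < N -> exists x', norm (minus x' x) <= r /\ 2 / 3 * r * N <= norm (S x').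
Proof.
  intros HS (_ & _ & Happrox) x r hr hN.
  destruct (Happrox (N / 3)) as [u [hu hSu]]; [lra|].
  destruct (sokal_step S x (scal (RtoC r) u) HS) as [x' [hx' hSx']].
  exists x'. rewrite (linear_scal S (bounded_linear_is_linear V S HS)), !(norm_scal_RtoC VN),
    Rabs_right in * by lra.
  split.
  - eapply Rle_trans; [exact hx'|]. nra.
  - eapply Rle_trans; [|exact hSx']. nra.
Qed.

(* Sokal's proof: pick [n_k] with [||A n_k|| >= 4^k] and points [x_k] with
   [|x_k - x_{k-1}| <= 3^-k] and [|A n_k x_k| >= 2/3 3^-k ||A n_k||]; at the limit [X],
   [|A n_k X| >= 1/6 (4/3)^k]. *)
Lemma unbounded_opnorms_unbounded_at (A : nat -> V -> V) (N : nat -> R) :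
  (forall n, bounded_linear V (A n)) -> (forall n, is_opnorm (A n) (N n)) ->
  (forall K, exists n, K < N n) -> exists X, forall B, exists n, B < norm (A n X).
Proof.
  intros HA HN Hbig.
  assert (Hstep : forall k (p : nat * V), exists p' : nat * V,
    norm (minus (snd p') (snd p)) <= (1 / 3) ^ S k /\ 4 ^ S k <= N (fst p') /\
    2 / 3 * (1 / 3) ^ S k * N (fst p') <= norm (A (fst p') (snd p'))).
  { intros k [n0 x]. destruct (Hbig (4 ^ S k)) as [n hn].
    assert (h4 : 0 < 4 ^ S k) by (apply pow_lt; lra).
    destruct (large_value_near (A n) (N n) (HA n) (HN n) x ((1 / 3) ^ S k)) as [x' [h1 h2]];
      [apply pow_lt; lra | lra |].
    exists (n, x'). split; [exact h1 | split; [left; exact hn | exact h2]]. }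
  destruct (dependent_choice _ (O, zero) Hstep) as [p [_ Hp]]. cbv beta in Hp.
  destruct (geometric_steps_converge (fun k => snd (p k)) (1 / 3)) as [X HX];
    [lra | intro k; apply Hp|].
  exists X. intro B.
  destruct (Pow_x_infinity (4 / 3)) with (b := 6 * B + 1) as [j Hj]; [rewrite Rabs_right; lra|].
  specialize (Hj (S j) (le_S _ _ (le_n j))). rewrite Rabs_right in Hj by (apply Rle_ge, pow_le; lra).
  destruct (Hp j) as (_ & h4 & hlarge).
  set (m := fst (p (S j))) in *. set (x' := snd (p (S j))) in *. set (r := (1 / 3) ^ S j) in *.
  exists m. assert (hr : 0 < r) by (apply pow_lt; lra).
  destruct (HN m) as (hNm & Hbound & _).
  assert (hclose : norm (minus (A m x') (A m X)) <= N m * (r / 2)).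
  { rewrite <- (linear_minus (A m) _ _ (bounded_linear_is_linear V _ (HA m))).
    eapply Rle_trans; [apply Hbound|]. apply Rmult_le_compat_l; [exact hNm|].
    rewrite <- (@norm_opp _ VN), (@opp_minus VG). eapply Rle_trans; [apply (HX (S j))|].
    unfold r. simpl. lra. }
  assert (h43 : (4 / 3) ^ S j = r * 4 ^ S j) by (unfold r; rewrite <- Rpow_mult_distr; f_equal; lra).
  assert (r * 4 ^ S j <= r * N m) by (apply Rmult_le_compat_l; [lra | exact h4]).
  assert (2 / 3 * r * N m <= N m * (r / 2) + norm (A m X)).
  { eapply Rle_trans; [exact hlarge|]. eapply Rle_trans; [apply norm_le_minus_plus|].
    apply Rplus_le_compat_r. exact hclose. }
  lra.
Qed.

Lemma uniform_boundedness (A : nat -> V -> V) :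
  (forall n, bounded_linear V (A n)) -> (forall x, exists B, forall n, norm (A n x) <= B) ->
  exists M, forall n u, norm (A n u) <= M * norm u.
Proof.
  intros HA Hpt. apply NNPP. intro Hno.
  pose (N n := proj1_sig (constructive_indefinite_description _ (opnorm_exists (A n) (HA n)))).
  assert (HN : forall n, is_opnorm (A n) (N n))
    by (intro n; exact (proj2_sig (constructive_indefinite_description _ _))).
  destruct (unbounded_opnorms_unbounded_at A N HA HN) as [X HX].
  - intro K. apply NNPP. intro Hc. apply Hno. exists K. intros n u.
    destruct (HN n) as (_ & Hb & _). eapply Rle_trans; [apply Hb|].
    apply Rmult_le_compat_r; [apply norm_ge_0|]. apply Rnot_lt_le. intro. apply Hc. eauto.
  - destruct (Hpt X) as [B HB]. destruct (HX B) as [n hn]. specialize (HB n). lra.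
Qed.
End UniformBoundedness.

Lemma finite_upper_bound (f : nat -> R) (N : nat) : exists B, forall n, (n < N)%nat -> f n <= B.
Proof.
  induction N as [|N [B HB]]; [exists 0; intros; lia|].
  exists (Rmax B (f N)). intros n hn. destruct (Nat.eq_dec n N) as [->|hne]; [apply Rmax_r|].
  eapply Rle_trans; [apply HB; lia | apply Rmax_l].
Qed.

(** * Strongly continuous semigroups *)

Section C0Semigroup.
Context (V : CompleteNormedModule C_AbsRing) (T : R -> V -> V) (HT : C0_semigroup V T).
Local Notation VG := (CompleteNormedModule.AbelianGroup C_AbsRing V).
Local Notation VN := (CompleteNormedModule.NormedModule C_AbsRing V).

Lemma C0_semigroup_linear t : 0 <= t -> is_linear (K := C_AbsRing) (U := V) (V := V) (T t).
Proof. intro ht. apply bounded_linear_is_linear, (proj1 HT t ht). Qed.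

Lemma C0_semigroup_0 x : T 0 x = x.
Proof. apply HT. Qed.

Lemma C0_semigroup_add t s x : 0 <= t -> 0 <= s -> T (t + s) x = T t (T s x).
Proof. intros; apply HT; auto. Qed.

Lemma C0_semigroup_right_continuous x eps : 0 < eps ->
  exists eta, 0 < eta /\ forall h, 0 <= h < eta -> norm (minus (T h x) x) < eps.
Proof.
  intro he. destruct HT as (_ & _ & _ & Hc).
  destruct (proj1 (filterlim_locally_ball_norm (fun t => T t x) x) (Hc x) (mkposreal eps he))
    as [d Hd].
  exists d. split; [apply cond_pos|]. intros h [[h0|h0] h1].
  - apply Hd; [|exact h0]. unfold ball; simpl; unfold AbsRing_ball, abs, minus, plus, opp; simpl.
    rewrite Ropp_0, Rplus_0_r, Rabs_right; lra.
  - subst h. rewrite C0_semigroup_0, (@minus_eq_zero VG), (@norm_zero _ VN). exact he.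
Qed.

Lemma C0_semigroup_bounded_near_0 (tn : nat -> R) : (forall n, 0 <= tn n <= / (INR n + 1)) ->
  forall x, exists B, forall n, norm (T (tn n) x) <= B.
Proof.
  intros Htn x. destruct (C0_semigroup_right_continuous x 1) as [eta [heta Heta]]; [lra|].
  destruct (INR_unbounded (/ eta)) as [N0 hN0].
  destruct (finite_upper_bound (fun n => norm (T (tn n) x)) N0) as [B HB].
  exists (Rmax B (norm x + 1)). intro n.
  destruct (Nat.lt_ge_cases n N0) as [h|h].
  - eapply Rle_trans; [apply (HB n h) | apply Rmax_l].
  - eapply Rle_trans; [|apply Rmax_r].
    assert (Hsmall : 0 <= tn n < eta).
    { destruct (Htn n) as [h1 h2]. split; [exact h1|].
      apply le_INR in h. assert (0 < / eta) by (apply Rinv_0_lt_compat; lra).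
      eapply Rle_lt_trans; [exact h2|]. rewrite <- (Rinv_inv eta).
      apply Rinv_lt_contravar; nra. }
    eapply Rle_trans; [apply (norm_le_minus_plus _ x)|]. rewrite Rplus_comm.
    apply Rplus_le_compat_l. left. exact (Heta _ Hsmall).
Qed.

Lemma C0_semigroup_locally_bounded : exists delta, 0 < delta /\ exists M, 0 <= M /\
  forall t, 0 <= t <= delta -> forall u, norm (T t u) <= M * norm u.
Proof.
  apply NNPP. intro Hno.
  assert (Hbad : forall n : nat, exists t, 0 <= t <= / (INR n + 1) /\
    exists u, INR n * norm u < norm (T t u)).
  { intro n. apply NNPP. intro Hc. apply Hno. exists (/ (INR n + 1)).
    split; [apply Rinv_0_lt_compat; pose proof (pos_INR n); lra|].
    exists (INR n). split; [apply pos_INR|]. intros t ht u.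
    apply Rnot_lt_le. intro Hl. apply Hc. eauto. }
  pose (tn n := proj1_sig (constructive_indefinite_description _ (Hbad n))).
  assert (Htn : forall n, 0 <= tn n <= / (INR n + 1) /\ exists u, INR n * norm u < norm (T (tn n) u))
    by (intro n; exact (proj2_sig (constructive_indefinite_description _ (Hbad n)))).
  destruct (uniform_boundedness V (fun n => T (tn n))) as [M HM].
  - intro n. apply (proj1 HT), Htn.
  - apply C0_semigroup_bounded_near_0. intro n. apply Htn.
  - destruct (INR_unbounded M) as [n hn]. destruct (Htn n) as [_ [u hu]].
    specialize (HM n u). pose proof (norm_ge_0 u). nra.
Qed.
End C0Semigroup.

Section Orbit.
Context (V : CompleteNormedModule C_AbsRing) (T : R -> V -> V) (HT : C0_semigroup V T).
Context (delta M : R) (hdelta : 0 < delta) (hM : 0 <= M)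
  (Hbound : forall t, 0 <= t <= delta -> forall u, norm (T t u) <= M * norm u).
Local Notation VG := (CompleteNormedModule.AbelianGroup C_AbsRing V).
Local Notation VN := (CompleteNormedModule.NormedModule C_AbsRing V).
Local Notation VR := (restrict_scalars V).

Lemma orbit_uniformly_continuous y eps : 0 < eps -> exists eta, 0 < eta /\
  forall a b, 0 <= a < delta -> a <= b -> b - a < eta -> norm (minus (T b y) (T a y)) < eps.
Proof.
  intro he.
  destruct (C0_semigroup_right_continuous V T HT y (eps / (M + 1))) as [eta [heta Heta]].
  { apply Rdiv_lt_0_compat; lra. }
  exists eta. split; [exact heta|]. intros a b ha hab hba.
  replace b with (a + (b - a)) by ring.
  rewrite (C0_semigroup_add V T HT) by lra.
  rewrite <- (linear_minus _ _ _ (C0_semigroup_linear V T HT a (proj1 ha))).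
  eapply Rle_lt_trans; [apply Hbound; lra|].
  assert (Hn : norm (minus (T (b - a) y) y) < eps / (M + 1)) by (apply Heta; lra).
  apply Rle_lt_trans with (M * (eps / (M + 1))); [apply Rmult_le_compat_l; [lra | left; exact Hn]|].
  apply Rmult_lt_reg_r with (M + 1); [lra|]. field_simplify; lra.
Qed.

(* Extended by [T 0 y] to negative times, so that the orbit is continuous at [0]. *)
Definition orbit (y : V) (r : R) : VR := T (Rmax 0 r) y.

Lemma orbit_nonneg y r : 0 <= r -> orbit y r = T r y.
Proof. intro hr. unfold orbit. rewrite Rmax_right by lra. reflexivity. Qed.

Lemma orbit_continuous y r : r < delta -> continuous (orbit y) r.
Proof.
  intro hr. apply (proj2 (filterlim_locally_ball_norm (U := VR) _ _)). intro eps.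
  destruct (orbit_uniformly_continuous y eps (cond_pos eps)) as [eta [heta Heta]].
  assert (hmr : Rmax 0 r < delta) by (unfold Rmax; destruct Rle_dec; lra).
  assert (hpos : 0 < Rmin eta (delta - Rmax 0 r)) by (apply Rmin_glb_lt; lra).
  exists (mkposreal _ hpos). intros s Hs.
  unfold ball in Hs; simpl in Hs; unfold AbsRing_ball, abs, minus, plus, opp in Hs; simpl in Hs.
  pose proof (Rmin_l eta (delta - Rmax 0 r)). pose proof (Rmin_r eta (delta - Rmax 0 r)).
  assert (Hmax : Rabs (Rmax 0 s - Rmax 0 r) <= Rabs (s - r))
    by (unfold Rmax; destruct (Rle_dec 0 s), (Rle_dec 0 r); unfold Rabs;
        repeat destruct Rcase_abs; lra).
  assert (Ha : Rabs (Rmax 0 s - Rmax 0 r) < eta) by (unfold Rminus in *; lra).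
  apply Rabs_def2 in Ha. pose proof (Rmax_l 0 s). pose proof (Rmax_l 0 r).
  unfold ball_norm, orbit.
  destruct (Rle_dec (Rmax 0 s) (Rmax 0 r)) as [h|h].
  - rewrite <- norm_opp, opp_minus. apply Heta; lra.
  - apply Heta; lra.
Qed.

Lemma ex_RInt_orbit y a b : a <= b -> b < delta -> ex_RInt (orbit y) a b.
Proof.
  intros hab hb. apply (ex_RInt_continuous (V := VR)). intros s [_ hs].
  apply orbit_continuous. rewrite Rmax_right in hs by lra. lra.
Qed.

Lemma orbit_average y a kappa : 0 <= a < delta -> 0 < kappa -> exists eta, 0 < eta /\
  forall e, 0 < e < eta -> a + e < delta ->
  norm (minus (scal (RtoC (/ e)) (RInt (orbit y) a (a + e))) (T a y)) <= kappa.
Proof.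
  intros ha hk. destruct (orbit_uniformly_continuous y kappa hk) as [eta [heta Heta]].
  exists eta. split; [exact heta|]. intros e he hae.
  set (I := RInt (orbit y) a (a + e)).
  assert (HI : is_RInt (orbit y) a (a + e) I) by (apply (RInt_correct (V := VR)), ex_RInt_orbit; lra).
  assert (Hclose : forall s, a <= s <= a + e -> norm (minus (orbit y s) (orbit y a)) <= kappa).
  { intros s hs. rewrite !orbit_nonneg by lra. left. apply Heta; lra. }
  pose proof (norm_RInt_le (fun s => minus (orbit y s) (orbit y a)) (fun _ => kappa) a (a + e) _ _
    ltac:(lra) Hclose (is_RInt_minus _ _ _ _ _ _ HI (is_RInt_const a (a + e) (orbit y a)))
    (is_RInt_const a (a + e) kappa)) as Hle.
  change (norm (minus I (scal (RtoC (a + e - a)) (orbit y a))) <= (a + e - a) * kappa) in Hle.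
  replace (a + e - a) with e in Hle by ring. rewrite orbit_nonneg in Hle by lra.
  assert (E : minus (scal (RtoC (/ e)) I) (T a y) =
              scal (RtoC (/ e)) (minus I (scal (RtoC e) (T a y)))).
  { rewrite scal_minus_distr_l, scal_assoc. f_equal.
    change (mult (RtoC (/ e)) (RtoC e)) with (Cmult (RtoC (/ e)) (RtoC e)).
    rewrite <- RtoC_mult, Rinv_l by lra. symmetry. exact (scal_one (T a y)). }
  rewrite E, (norm_scal_RtoC VN), Rabs_right by (apply Rle_ge, Rlt_le, Rinv_0_lt_compat; lra).
  apply Rmult_le_reg_l with e; [lra|].
  rewrite <- Rmult_assoc, Rinv_r, Rmult_1_l by lra. exact Hle.
Qed.

Lemma shift_RInt_orbit y h e : 0 <= h -> 0 <= e -> h + e < delta ->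
  T e (RInt (orbit y) 0 h) = RInt (orbit y) e (h + e).
Proof.
  intros hh he hhe.
  pose proof (is_RInt_linear (U := VR) (W := VR) (T e) (orbit y) 0 h _ (bounded_linear_is_linear_R V (T e) (proj1 HT e he))
    (RInt_correct _ _ _ (ex_RInt_orbit y 0 h hh ltac:(lra)))) as Hshift.
  assert (Hcomp : is_RInt (V := VR) (fun r => T e (orbit y r)) 0 h (RInt (orbit y) e (h + e))).
  { assert (J : is_RInt (orbit y) (1 * 0 + e) (1 * h + e) (RInt (orbit y) e (h + e))).
    { replace (1 * 0 + e) with e by ring. replace (1 * h + e) with (h + e) by ring.
      apply (RInt_correct (V := VR)), ex_RInt_orbit; lra. }
    apply is_RInt_comp_lin in J. eapply is_RInt_ext; [|exact J].
    intros r hr. rewrite Rmin_left, Rmax_right in hr by lra.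
    transitivity (orbit y (1 * r + e)); [exact (scal_one _)|]. rewrite !orbit_nonneg by lra.
    replace (1 * r + e) with (e + r) by ring. apply (C0_semigroup_add V T HT); lra. }
  rewrite <- (is_RInt_unique _ _ _ _ Hshift). exact (is_RInt_unique _ _ _ _ Hcomp).
Qed.

Lemma diffq_RInt_orbit y h e : 0 <= h -> 0 < e -> h + e < delta ->
  diffq V T (RInt (orbit y) 0 h) e =
  minus (scal (RtoC (/ e)) (RInt (orbit y) h (h + e))) (scal (RtoC (/ e)) (RInt (orbit y) 0 e)).
Proof.
  intros hh he hhe. unfold diffq. rewrite <- scal_minus_distr_l. f_equal.
  rewrite shift_RInt_orbit by lra. apply (@minus_eq_of_plus_eq VG).
  rewrite (RInt_Chasles (V := VR) (orbit y) 0 h (h + e)), (RInt_Chasles (V := VR) (orbit y) 0 e (h + e));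
    try reflexivity; apply ex_RInt_orbit; lra.
Qed.

Lemma increment_in_generator_range (A : op V) (HA : is_generator V T A) y h :
  0 < h < delta / 2 -> exists w, dom A w /\ app A w = minus (T h y) y.
Proof.
  intro hh. set (w := RInt (orbit y) 0 h).
  assert (Hlim : filterlim (diffq V T w) (at_right 0) (locally (minus (T h y) y))).
  { apply (proj2 (filterlim_locally_ball_norm (U := VN) _ _)). intro eps. pose proof (cond_pos eps).
    destruct (orbit_average y h (eps / 3)) as [e1 [he1 Hav1]]; [lra | lra |].
    destruct (orbit_average y 0 (eps / 3)) as [e2 [he2 Hav2]]; [lra | lra |].
    assert (hpos : 0 < Rmin (Rmin e1 e2) (delta / 2)) by (repeat apply Rmin_glb_lt; lra).
    exists (mkposreal _ hpos). intros e He hpe.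
    unfold ball in He; simpl in He; unfold AbsRing_ball, abs, minus, plus, opp in He; simpl in He.
    rewrite Ropp_0, Rplus_0_r, Rabs_right in He by lra.
    pose proof (Rmin_l (Rmin e1 e2) (delta / 2)). pose proof (Rmin_r (Rmin e1 e2) (delta / 2)).
    pose proof (Rmin_l e1 e2). pose proof (Rmin_r e1 e2).
    pose proof (Hav1 e ltac:(lra) ltac:(lra)) as Hh. pose proof (Hav2 e ltac:(lra) ltac:(lra)) as Hz.
    rewrite Rplus_0_l, (C0_semigroup_0 V T HT) in Hz.
    unfold ball_norm, w. rewrite diffq_RInt_orbit, (@minus_minus_swap VG) by lra.
    eapply Rle_lt_trans; [apply (norm_triangle (V := VN))|]. rewrite (@norm_opp _ VN).
    apply Rle_lt_trans with (eps / 3 + eps / 3); [apply Rplus_le_compat; [exact Hh | exact Hz] | lra]. }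
  destruct (HA w) as [Hdom Happ].
  assert (Hw : dom A w) by (apply Hdom; eauto).
  exists w. split; [exact Hw|].
  apply (filterlim_locally_unique (diffq V T w) _ _ (Happ Hw) Hlim).
Qed.
End Orbit.

Lemma generator_annihilator_invariant (V : CompleteNormedModule C_AbsRing) (T : R -> V -> V)
  (HT : C0_semigroup V T) (A : op V) (HA : is_generator V T A) (phi : V -> C)
  (Hphi : forall a b, phi (minus a b) = Cminus (phi a) (phi b))
  (Hperp : forall x, dom A x -> phi (app A x) = RtoC 0) s y :
  0 <= s -> phi (T s y) = phi y.
Proof.
  intro hs. destruct (C0_semigroup_locally_bounded V T HT) as [delta [hd [M [hM Hb]]]].
  assert (Hsmall : forall h v, 0 <= h <= delta / 3 -> phi (T h v) = phi v).
  { intros h v [[h0|h0] h1].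
    - destruct (increment_in_generator_range V T HT delta M hd hM Hb A HA v h) as [w [Hw Ew]];
        [lra|].
      pose proof (Hperp w Hw) as E. rewrite Ew, Hphi in E.
      rewrite <- (Cplus_0_r (phi v)), <- E. ring.
    - subst h. rewrite (C0_semigroup_0 V T HT). reflexivity. }
  assert (Hind : forall n : nat, forall s v, 0 <= s <= INR n * (delta / 3) -> phi (T s v) = phi v).
  { induction n as [|n IH]; intros s' v hs'.
    - apply Hsmall. simpl in hs'. lra.
    - rewrite S_INR in hs'. destruct (Rle_dec s' (delta / 3)) as [h|h]; [apply Hsmall; lra|].
      replace s' with (delta / 3 + (s' - delta / 3)) by ring.
      rewrite (C0_semigroup_add V T HT), Hsmall by lra. apply IH. lra. }
  destruct (INR_unbounded (s / (delta / 3))) as [n hn].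
  apply (Hind n). split; [exact hs|].
  apply Rlt_le. replace s with (s / (delta / 3) * (delta / 3)) at 1 by (field; lra).
  apply Rmult_lt_compat_r; lra.
Qed.

Lemma closure_range_orthogonal (V : CompleteNormedModule C_AbsRing) (ip : V -> V -> C)
  (Hip : is_inner_product V ip) (A B : op V) (z : V) :
  is_closure V A B -> (forall x, dom A x -> ip (app A x) z = RtoC 0) ->
  forall x, dom B x -> ip (app B x) z = RtoC 0.
Proof.
  intros HB HA x Hx. set (y := app B x).
  apply Cmod_eq_0, Rle_antisym; [|apply Cmod_ge_0].
  apply Rle_plus_epsilon. intros e he. rewrite Rplus_0_l.
  pose proof (norm_ge_0 z).
  destruct (proj1 (HB x y) (conj Hx eq_refl) (e / (norm z + 1))) as [a [Ha [_ Hclose]]].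
  { apply Rdiv_lt_0_compat; lra. }
  replace (ip y z) with (Copp (ip (minus (app A a) y) z))
    by (rewrite (ip_minus_l V ip Hip), HA by exact Ha; ring).
  rewrite Cmod_opp. eapply Rle_trans; [apply (Cauchy_Schwarz V ip Hip)|].
  apply Rle_trans with (e / (norm z + 1) * norm z); [apply Rmult_le_compat_r; lra|].
  apply Rmult_le_reg_r with (norm z + 1); [lra|].
  replace (e / (norm z + 1) * norm z * (norm z + 1)) with (e * norm z) by (field; lra). nra.
Qed.

(** * The semigroup [P + T(t) Q] *)

Definition proj_sum (V : CompleteNormedModule C_AbsRing) (P : V -> V) (T : R -> V -> V) t x : V :=
  plus (P x) (T t (minus x (P x))).

Section ProjectionSum.
Context (V : CompleteNormedModule C_AbsRing) (P : V -> V) (T : R -> V -> V).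
Local Notation VG := (CompleteNormedModule.AbelianGroup C_AbsRing V).
Local Notation VN := (CompleteNormedModule.NormedModule C_AbsRing V).

Lemma proj_sum_minus t x :
  minus (proj_sum V P T t x) x = minus (T t (minus x (P x))) (minus x (P x)).
Proof.
  unfold proj_sum.
  transitivity (minus (plus (P x) (T t (minus x (P x)))) (plus (P x) (minus x (P x)))).
  - f_equal. symmetry. exact (@plus_minus_cancel VG _ _).
  - exact (@minus_plus_plus_l VG _ _ _).
Qed.

Lemma diffq_proj_sum x h : diffq V (proj_sum V P T) x h = diffq V T (minus x (P x)) h.
Proof. unfold diffq. rewrite proj_sum_minus. reflexivity. Qed.

Lemma proj_sum_generator (A : op V) : is_generator V T A ->
  is_generator V (proj_sum V P T) (rcomp V A (fun x => minus x (P x))).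
Proof.
  intros HA x. destruct (HA (minus x (P x))) as [Hdom Hlim]. simpl. split.
  - rewrite Hdom. split; intros [y Hy]; exists y; (eapply filterlim_ext; [|exact Hy]);
      intro h; rewrite diffq_proj_sum; reflexivity.
  - intro Hx. eapply filterlim_ext; [|exact (Hlim Hx)]. intro h. symmetry. apply diffq_proj_sum.
Qed.

Context (HP : bounded_linear V P) (HPP : forall x, P (P x) = P x) (HT : C0_semigroup V T)
  (HPT : forall s y, 0 <= s -> P (T s y) = P y).

Lemma proj_complement x : P (minus x (P x)) = zero.
Proof.
  rewrite (linear_minus P _ _ (bounded_linear_is_linear V P HP)), HPP. apply (@minus_eq_zero VG).
Qed.

Lemma is_linear_proj_complement :
  is_linear (K := C_AbsRing) (U := V) (V := V) (fun x => minus x (P x)).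
Proof.
  apply (is_linear_comp (fun x => (x, opp (P x))) (fun p => plus (fst p) (snd p))).
  - apply is_linear_prod; [apply is_linear_id|].
    apply (is_linear_comp P opp); [exact (bounded_linear_is_linear V P HP) | apply is_linear_opp].
  - apply is_linear_plus.
Qed.

Lemma proj_sum_C0_semigroup : C0_semigroup V (proj_sum V P T).
Proof.
  split; [|split; [|split]].
  - intros t ht. apply is_linear_bounded_linear.
    apply (is_linear_comp (fun x => (P x, T t (minus x (P x)))) (fun p => plus (fst p) (snd p))).
    + apply is_linear_prod; [exact (bounded_linear_is_linear V P HP)|].
      apply (is_linear_comp _ (T t)); [apply is_linear_proj_complement|].
      exact (C0_semigroup_linear V T HT t ht).
    + apply is_linear_plus.
  - intro x. unfold proj_sum. rewrite (C0_semigroup_0 V T HT). apply (@plus_minus_cancel VG).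
  - intros t s x ht hs. unfold proj_sum. rewrite (C0_semigroup_add V T HT) by auto.
    set (y := T s (minus x (P x))).
    assert (HPy : P (plus (P x) y) = P x).
    { rewrite (linear_plus P (bounded_linear_is_linear V P HP)), HPP. unfold y.
      rewrite HPT, proj_complement by exact hs. apply (@plus_zero_r VG). }
    rewrite HPy, (@minus_plus_l VG). reflexivity.
  - intro x. apply (proj2 (filterlim_locally_ball_norm (U := VN) _ _)). intro eps.
    eapply filter_imp; [|exact (proj1 (filterlim_locally_ball_norm (U := VN) _ _)
                                  (proj2 (proj2 (proj2 HT)) (minus x (P x))) eps)].
    intros t Ht. unfold ball_norm in *. rewrite proj_sum_minus. exact Ht.
Qed.

End ProjectionSum.

Theorem lemma2 (H : CompleteNormedModule C_AbsRing) (ip : H -> H -> C)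
  (Hip : is_inner_product H ip)
  (U : R -> H -> H) (L : op H)
  (HU : C0_semigroup H U) (HL : is_generator H U L)
  (z : H) (Hz : in_adj_dom H ip L z) (Hz0 : z <> zero)
  (QLbar : op H) (HQLbar : is_closure H (lcomp H (projQ H ip z) L) QLbar)
  (T : R -> H -> H) (HT : C0_semigroup H T) (HTgen : is_generator H T QLbar) :
  C0_semigroup H (fun t x => plus (projP H ip z x) (T t (projQ H ip z x))) /\
  is_generator H (fun t x => plus (projP H ip z x) (T t (projQ H ip z x)))
    (rcomp H QLbar (projQ H ip z)).
Proof.
  assert (Hperp : forall x, dom QLbar x -> ip (app QLbar x) z = RtoC 0).
  { apply (closure_range_orthogonal H ip Hip _ _ z HQLbar). intros x _.
    apply (ip_projQ H ip Hip z Hz0). }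
  assert (HPT : forall s y, 0 <= s -> projP H ip z (T s y) = projP H ip z y).
  { intros s y hs. apply projP_ext.
    apply (generator_annihilator_invariant H T HT QLbar HTgen (fun v => ip v z)); auto.
    intros a b. apply (ip_minus_l H ip Hip). }
  split.
  - exact (proj_sum_C0_semigroup H _ T (projP_bounded_linear H ip Hip z Hz0)
             (projP_idem H ip Hip z Hz0) HT HPT).
  - exact (proj_sum_generator H _ T QLbar HTgen).
Qed.
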